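(* Let $k>1$, $g_c=k/(1+k)^2$ and $X(g)=\frac{1-\sqrt{1-4g}}2$. For $T_0\in\mathcal T_{\rm fin}$ of height $r$ with $K=|D_r(T_0)|$, set $\Lambda(T_0)=K\,k^{r-1}g_c^{|T_0|-K}X(g_c)^{K-1}$. Then for every $r\in\mathbb N$, $$\sum_{T_0\in\mathcal T_{\rm fin}:\,h(T_0)=r}\Lambda(T_0)=1.$$
   Context: Rooted planar trees: $D_r(T)$ is the ordered set of vertices at height $r$, root has exactly one child; $|T|$ = number of edges; $h(T)$ = height; $\mathcal T_{\rm fin}$ = set of finite such trees. *)

From HB Require Import structures.
From mathcomp Require Import all_boot all_order all_algebra.
From mathcomp Require Import all_classical all_reals all_analysis.
Set Implicit Arguments. Unset Strict Implicit. Unset Printing Implicit Defensive.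
Import Order.TTheory GRing.Theory Num.Theory.

(* Rooted planar (plane) trees: a vertex together with the ordered list of
   the subtrees rooted at its children. *)
Inductive ptree : Type := PNode of seq ptree.

Fixpoint ptree_enc (t : ptree) : GenTree.tree unit :=
  match t with PNode ts => GenTree.Node 0 (map ptree_enc ts) end.
Fixpoint ptree_dec (u : GenTree.tree unit) : ptree :=
  match u with
  | GenTree.Leaf _ => PNode [::]
  | GenTree.Node _ us => PNode (map ptree_dec us)
  end.
Fixpoint ptree_encK (t : ptree) : ptree_dec (ptree_enc t) = t :=
  match t return ptree_dec (ptree_enc t) = t with
  | PNode ts => f_equal PNode
      ((fix aux (ss : seq ptree) : map ptree_dec (map ptree_enc ss) = ss :=
          match ss return map ptree_dec (map ptree_enc ss) = ss with
          | [::] => erefl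
          | s :: ss' => f_equal2 cons (ptree_encK s) (aux ss')
          end) ts)
  end.
HB.instance Definition _ := Equality.copy ptree (can_type ptree_encK).
HB.instance Definition _ := Choice.copy ptree (can_type ptree_encK).
HB.instance Definition _ := Countable.copy ptree (can_type ptree_encK).

(* |T| : number of edges *)
Fixpoint edges (t : ptree) : nat :=
  match t with PNode ts => sumn (map (fun s => (edges s).+1) ts) end.

Fixpoint height (t : ptree) : nat :=
  match t with PNode ts => foldr maxn 0 (map (fun s => (height s).+1) ts) end.

(* |D_d(T)| : number of vertices at height (distance from the root) d *)
Fixpoint level_size (d : nat) (t : ptree) : nat :=
  match d, t with
  | 0, _ => 1
  | d'.+1, PNode ts => sumn (map (level_size d') ts)
  end.

Definition planted (t : ptree) : bool :=
  if t is PNode [:: _] then true else false.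

Local Open Scope ring_scope.

Definition g_c {R : realType} (k : R) : R := k / (1 + k) ^+ 2.
Definition Xfun {R : realType} (g : R) : R := (1 - Num.sqrt (1 - 4 * g)) / 2.

Definition Lambda {R : realType} (k : R) (T0 : ptree) : R :=
  let r := height T0 in
  let K := level_size r T0 in
  K%:R * k ^+ (r - 1) * (g_c k) ^+ (edges T0 - K) * (Xfun (g_c k)) ^+ (K - 1).

(* Put g = g_c(k) and y = (1 + k) / k, so that g y = X(g_c) = 1 / (1 + k) and
   y (1 - g y) = 1.  A planted tree of height d + 1 is an edge above a tree S of
   height d, and its Lambda equals k^(d+1) / (1 + k) * K g^|S| y^K, where
   K = |D_d(S)|.  Give a tree of height at most d the weight g^|T| y^|D_d(T)|.
   Splitting a tree into the sequence of its root subtrees turns the total weight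
   W_d into 1 / (1 - g W_(d-1)), so W_d = y for all d; doing the same with one
   marked vertex at height d gives V_d = g y^2 V_(d-1) = y k^-d for the weights
   multiplied by K.  Trees of height below d have K = 0, so the sum is
   k^(d+1) / (1 + k) * y k^-d = 1. *)

From HB Require Import structures.
From mathcomp Require Import all_boot all_order all_algebra.
From mathcomp Require Import all_classical all_reals all_analysis.
From mathcomp Require Import ring lra zify.
Set Implicit Arguments. Unset Strict Implicit. Unset Printing Implicit Defensive.
Import Order.TTheory GRing.Theory Num.Theory.
Local Open Scope classical_set_scope.
Local Open Scope ring_scope.

Section nonneg_esum.
Variable R : realType.

Lemma esumZl (T : choiceType) (I : set T) (F : T -> \bar R) (c : R) :
  0 <= c -> (forall i, 0 <= F i)%E ->
  (\esum_(i in I) (c%:E * F i) = c%:E * \esum_(i in I) F i)%E.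
Proof.
move=> c0 F0; rewrite /esum -ereal_supZl//; last first.
  by apply/set0P; exists 0%E; exists set0; [exact: fsets_set0|rewrite fsbig_set0].
congr ereal_sup; apply/seteqP; split => x /=.
  by move=> [A FA <-]; exists (\sum_(i \in A) F i)%E; [exists A|rewrite ge0_mule_fsumr].
by move=> [_ [A FA <-] <-]; exists A => //; rewrite ge0_mule_fsumr.
Qed.

Lemma esum_setX_mul (T1 T2 : choiceType) (I : set T1) (J : set T2)
    (a : T1 -> R) (b : T2 -> R) (B : R) :
  (forall i, 0 <= a i) -> (forall j, 0 <= b j) ->
  \esum_(j in J) (b j)%:E = B%:E ->
  \esum_(p in I `*` J) (a p.1 * b p.2)%:E = ((\esum_(i in I) (a i)%:E) * B%:E)%E.
Proof.
move=> a0 b0 sumB.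
have B0 : 0 <= B by rewrite -lee_fin -sumB esum_ge0 // => j _; rewrite lee_fin.
transitivity (\esum_(i in I) \esum_(j in J) (a i * b j)%:E)%E.
  by rewrite (esum_esum (J := fun=> J)) // => i j _ _; rewrite lee_fin mulr_ge0.
transitivity (\esum_(i in I) (B%:E * (a i)%:E))%E.
  apply: eq_esum => i _; under eq_esum do rewrite EFinM.
  by rewrite esumZl ?sumB // muleC.
by rewrite esumZl // muleC.
Qed.

End nonneg_esum.

Section sequences.
Variable T : choiceType.
Implicit Type H : set T.

Definition seqs_in H : set (seq T) := [set s : seq T | forall t : T, t \in s -> H t].

Definition seqs_of_size H (m : nat) : set (seq T) := seqs_in H `&` [set s | size s = m].

Lemma seqs_of_size0 H : seqs_of_size H 0 = [set [::]].
Proof. by apply/seteqP; split => [[|? ?] [] //|_ ->]. Qed.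

Lemma seqs_of_sizeS H m :
  seqs_of_size H m.+1 = (fun p => p.1 :: p.2) @` (H `*` seqs_of_size H m).
Proof.
apply/seteqP; split => [[|t s] [/= sH] // [sz]|_ [[t s] [/= Ht [sH <-]] <-]].
  exists (t, s) => //; split; first by apply: sH; rewrite mem_head.
  by split => // u us; apply: sH; rewrite in_cons us orbT.
by split => // u; rewrite in_cons => /orP[/eqP ->|/sH].
Qed.

Lemma set_inj_cons (P : set (T * seq T)) : set_inj P (fun p => p.1 :: p.2).
Proof. by move=> [? ?] [? ?] _ _ [-> ->]. Qed.

Lemma seqs_in_bigcup H : seqs_in H = \bigcup_(m in [set: nat]) seqs_of_size H m.
Proof. by apply/seteqP; split => [s sH|s [m _ []//]]; exists (size s). Qed.

Lemma trivIset_seqs_of_size H : trivIset [set: nat] (seqs_of_size H).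
Proof. by move=> i j _ _ [s [[_ <-] [_ <-]]]. Qed.

Section weights.
Variables (R : realType) (H : set T) (f : T -> R) (A : R).
Hypotheses (f_ge0 : forall t, 0 <= f t) (sumA : \esum_(t in H) (f t)%:E = A%:E).

Lemma esum_seqs_of_size_prod m :
  \esum_(s in seqs_of_size H m) (\prod_(t <- s) f t)%:E = (A ^+ m)%:E.
Proof.
elim: m => [|m IH]; first by rewrite seqs_of_size0 esum_set1 ?big_nil ?lee_fin.
rewrite seqs_of_sizeS esum_image; last exact: set_inj_cons.
under eq_esum do rewrite big_cons.
by rewrite (esum_setX_mul H f_ge0 _ IH) ?sumA -?EFinM ?exprS // => s; exact: prodr_ge0.
Qed.

Lemma esum_seqs_of_size_sum_prod (c : T -> nat) (B : R) :
  \esum_(t in H) ((c t)%:R * f t)%:E = B%:E -> forall m,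
  \esum_(s in seqs_of_size H m) ((\sum_(t <- s) c t)%:R * \prod_(t <- s) f t)%:E
    = (m%:R * A ^+ m.-1 * B)%:E.
Proof.
move=> sumB; elim=> [|m IH].
  by rewrite seqs_of_size0 esum_set1 ?big_nil ?mul0r ?lee_fin.
rewrite seqs_of_sizeS esum_image; last exact: set_inj_cons.
have prod_ge0 s : 0 <= \prod_(t <- s) f t by exact: prodr_ge0.
transitivity (\esum_(p in H `*` seqs_of_size H m)
   (((c p.1)%:R * f p.1) * \prod_(t <- p.2) f t)%:E +
   \esum_(p in H `*` seqs_of_size H m)
   (f p.1 * ((\sum_(t <- p.2) c t)%:R * \prod_(t <- p.2) f t))%:E)%E.
  rewrite -esumD => [||p _]; last by rewrite lee_fin !mulr_ge0.
  - apply: eq_esum => p _ /=; rewrite !big_cons -EFinD natrD; congr EFin; ring.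
  - by move=> p _; rewrite lee_fin !mulr_ge0.
have cf_ge0 t : 0 <= (c t)%:R * f t by rewrite mulr_ge0.
have sum_prod_ge0 s : 0 <= (\sum_(t <- s) c t)%:R * \prod_(t <- s) f t.
  by rewrite mulr_ge0.
rewrite (esum_setX_mul H cf_ge0 prod_ge0 (esum_seqs_of_size_prod m)).
rewrite (esum_setX_mul H f_ge0 sum_prod_ge0 IH).
rewrite sumA sumB -!EFinM -EFinD /=; congr EFin.
have -> : A * (m%:R * A ^+ m.-1 * B) = m%:R * A ^+ m * B.
  by case: m {IH} => [|m]; rewrite ?mul0r ?mulr0 //= exprS; ring.
by rewrite -natr1; ring.
Qed.

End weights.
End sequences.

Section geometric.
Variable R : realType.
Implicit Type x : R.

Lemma esum_geometric x : 0 <= x < 1 ->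
  \esum_(m in [set: nat]) (x ^+ m)%:E = ((1 - x)^-1)%:E.
Proof.
move=> /andP[x0 x1].
rewrite -nneseries_esumT => [|m]; last by rewrite lee_fin exprn_ge0.
have := @cvg_geometric_series R 1 x; rewrite ger0_norm // mul1r => /(_ x1) geo.
apply/cvg_lim => //; apply/fine_cvgP; split; first by apply: nearW => n; rewrite sumEFin.
apply: cvg_trans geo; apply: near_eq_cvg; apply: nearW => n /=.
by rewrite sumEFin /= /series /=; under eq_bigr do rewrite mul1r.
Qed.

Lemma sum_geometric_deriv_closed x n :
  (\sum_(0 <= m < n.+1) m%:R * x ^+ m.-1) * (1 - x) ^+ 2
    = 1 - n.+1%:R * x ^+ n + n%:R * x ^+ n.+1.
Proof.
elim: n => [|n IH]; first by rewrite big_nat1 mul0r mul0r expr0 mulr1 mul0r addr0 subrr.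
by rewrite big_nat_recr //= mulrDl IH -!natr1 !exprS; ring.
Qed.

Lemma sum_geometric_deriv_le x n : 0 <= x < 1 ->
  \sum_(0 <= m < n) m%:R * x ^+ m.-1 <= ((1 - x) ^+ 2)^-1.
Proof.
move=> /andP[x0 x1].
have sq_gt0 : 0 < (1 - x) ^+ 2 by rewrite exprn_gt0 // subr_gt0.
case: n => [|n]; first by rewrite big_geq // invr_ge0 ltW.
rewrite -(ler_pM2r sq_gt0) mulVf ?gt_eqF // sum_geometric_deriv_closed.
suff : n%:R * x ^+ n.+1 <= n.+1%:R * x ^+ n by lra.
apply: ler_pM; rewrite ?ler_nat ?exprn_ge0 //.
by rewrite exprS ler_piMl ?exprn_ge0 // ltW.
Qed.

Lemma esum_nat_shift (a : nat -> \bar R) : (forall m, 0 <= a m)%E ->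
  (\esum_(m in [set: nat]) a m = a 0%N + \esum_(m in [set: nat]) a m.+1)%E.
Proof.
move=> a0; rewrite (esumID [set 0%N]) // setTI esum_set1 //; congr (_ + _)%E.
have -> : [set: nat] `&` ~` [set 0%N] = succn @` [set: nat].
  apply/seteqP; split => [[[_ /(_ erefl)]//|m _]|_ [m _ <-]//]; by exists m.
by rewrite esum_image //; move=> ? ? _ _ [].
Qed.

(* Shifting the index once shows that the sum, which is finite, solves
   [S = x S + (1 - x)^-1]. *)
Lemma esum_geometric_deriv x : 0 <= x < 1 ->
  \esum_(m in [set: nat]) (m%:R * x ^+ m.-1)%:E = (((1 - x) ^+ 2)^-1)%:E.
Proof.
move=> x01; have /andP[x0 x1] := x01.
have term_ge0 m : 0 <= m%:R * x ^+ m.-1 by rewrite mulr_ge0 ?exprn_ge0.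
set S := (\esum_(m in _) _)%E.
have S_fin : S \is a fin_num.
  rewrite ge0_fin_numE; last by apply: esum_ge0 => m _; rewrite lee_fin.
  rewrite /S -nneseries_esumT => [|m]; last by rewrite lee_fin.
  apply: le_lt_trans (ltry (((1 - x) ^+ 2)^-1)).
  apply: lime_le; first by apply: is_cvg_nneseries => m _ _; rewrite lee_fin.
  by apply: nearW => n; rewrite sumEFin lee_fin sum_geometric_deriv_le.
have S_eq : S = (x%:E * S + ((1 - x)^-1)%:E)%E.
  rewrite {1}/S esum_nat_shift => [|m]; last by rewrite lee_fin.
  rewrite mul0r add0e -esumZl //.
  rewrite -esum_geometric // -esumD => [||m _]; last by rewrite lee_fin exprn_ge0.
    apply: eq_esum => -[|m] _; rewrite -EFinM -EFinD /=; congr EFin.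
      by rewrite mul0r mulr0 add0r expr0 mulr1.
    by rewrite -!natr1 exprS; ring.
  by move=> m _; rewrite -EFinM lee_fin mulr_ge0.
rewrite -(fineK S_fin) in S_eq *; congr EFin.
move: S_eq; rewrite -EFinM -EFinD => -[S_eq].
have x1_neq0 : 1 - x != 0 by rewrite subr_eq0 eq_sym lt_eqF.
apply: (mulIf (expf_neq0 2 x1_neq0)); rewrite mulVf ?expf_neq0 //.
have : fine S * (1 - x) = (1 - x)^-1 by rewrite mulrBr mulr1 {1}S_eq; ring.
by rewrite expr2 mulrA => ->; rewrite mulVf.
Qed.

End geometric.

Section sequence_sums.
Variables (R : realType) (T : choiceType) (H : set T) (f : T -> R) (A : R).
Hypotheses (f_ge0 : forall t, 0 <= f t) (sumA : \esum_(t in H) (f t)%:E = A%:E).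
Hypothesis A01 : 0 <= A < 1.

Lemma esum_seqs_in_prod :
  \esum_(s in seqs_in H) (\prod_(t <- s) f t)%:E = ((1 - A)^-1)%:E.
Proof.
rewrite seqs_in_bigcup esum_bigcupT; last 2 first.
- exact: trivIset_seqs_of_size.
- by move=> s; rewrite lee_fin prodr_ge0.
under eq_esum do rewrite (esum_seqs_of_size_prod f_ge0 sumA).
exact: esum_geometric.
Qed.

Lemma esum_seqs_in_sum_prod (c : T -> nat) (B : R) :
  \esum_(t in H) ((c t)%:R * f t)%:E = B%:E ->
  \esum_(s in seqs_in H) ((\sum_(t <- s) c t)%:R * \prod_(t <- s) f t)%:E
    = (B / (1 - A) ^+ 2)%:E.
Proof.
move=> sumB; rewrite seqs_in_bigcup esum_bigcupT; last 2 first.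
- exact: trivIset_seqs_of_size.
- by move=> s; rewrite lee_fin mulr_ge0 ?prodr_ge0.
have B0 : 0 <= B.
  by rewrite -lee_fin -sumB esum_ge0 // => t _; rewrite lee_fin mulr_ge0.
have /andP[A0 _] := A01.
under eq_esum do rewrite (esum_seqs_of_size_sum_prod f_ge0 sumA sumB) EFinM muleC.
rewrite esumZl ?esum_geometric_deriv -?EFinM // => m.
by rewrite lee_fin mulr_ge0 ?exprn_ge0.
Qed.

End sequence_sums.

Lemma ptree_ind_mem (P : ptree -> Prop) :
  (forall ts, (forall t, t \in ts -> P t) -> P (PNode ts)) -> forall t, P t.
Proof.
move=> IH; fix F 1 => -[ts]; apply: IH.
elim: ts => [u|s ss IHs u]; first by clear F; rewrite in_nil.
rewrite in_cons => /orP[/eqP -> | /IHs //]; exact: F.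
Qed.

Lemma height_PNode_lt ts d :
  (height (PNode ts) < d.+1)%N = all (fun t => height t < d)%N ts.
Proof. by elim: ts => //= t ts IH; rewrite gtn_max ltnS IH. Qed.

Lemma height_planted t : height (PNode [:: t]) = (height t).+1.
Proof. exact: maxn0. Qed.

Lemma level_sizeS_PNode d ts :
  level_size d.+1 (PNode ts) = (\sum_(t <- ts) level_size d t)%N.
Proof. by elim: ts => [|t ts IH]; rewrite ?big_nil ?big_cons //= -IH. Qed.

Lemma edges_PNode ts : edges (PNode ts) = (\sum_(t <- ts) (edges t).+1)%N.
Proof. by elim: ts => [|t ts IH]; rewrite ?big_nil ?big_cons //= -IH. Qed.

Lemma level_size_gt_height d t : (height t < d)%N -> level_size d t = 0%N.
Proof.
elim/ptree_ind_mem: t d => ts IH [|d] //; rewrite height_PNode_lt.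
move=> /allP ts_low; rewrite level_sizeS_PNode big_seq big1 // => t t_in.
exact/IH/ts_low.
Qed.

Lemma level_size_le_edges d t : (level_size d t <= (edges t).+1)%N.
Proof.
elim/ptree_ind_mem: t d => ts IH [|d] //.
rewrite level_sizeS_PNode edges_PNode leqW // big_seq [X in (_ <= X)%N]big_seq.
by apply: leq_sum => t t_in; exact: IH.
Qed.

Definition trees_of_height_le (d : nat) : set ptree := [set t | (height t <= d)%N].

Lemma trees_of_height_le0 : trees_of_height_le 0 = [set PNode [::]].
Proof.
apply/seteqP; split => [[[|t ts]]|_ ->] //=.
by rewrite /trees_of_height_le /= geq_max ltn0.
Qed.

Lemma trees_of_height_leS d :
  trees_of_height_le d.+1 = PNode @` seqs_in (trees_of_height_le d).
Proof.
apply/seteqP; split => [[ts]|_ [ts ts_low <-]];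
  rewrite /trees_of_height_le /mkset -ltnS height_PNode_lt.
  by move=> /allP ts_low; exists ts.
by apply/allP => t /ts_low.
Qed.

Lemma set_inj_PNode (P : set (seq ptree)) : set_inj P PNode.
Proof. by move=> ? ? _ _ []. Qed.

Section tree_weights.
Variables (R : realType) (g y : R).

Definition tree_weight d t := g ^+ edges t * y ^+ level_size d t.

Lemma tree_weightS_PNode d ts :
  tree_weight d.+1 (PNode ts) = \prod_(t <- ts) (g * tree_weight d t).
Proof.
rewrite /tree_weight edges_PNode level_sizeS_PNode.
elim: ts => [|t ts IH]; first by rewrite !big_nil !expr0 mulr1.
by rewrite !big_cons -IH !exprD exprS; ring.
Qed.

Hypotheses (g_gt0 : 0 < g) (y_gt0 : 0 < y) (gy_lt1 : g * y < 1).
Hypothesis y_fix : y * (1 - g * y) = 1.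

Let gy01 : 0 <= g * y < 1. Proof. by rewrite gy_lt1 mulr_ge0 ?ltW. Qed.

Let y_inv : (1 - g * y)^-1 = y.
Proof.
have gy_neq1 : 1 - g * y != 0 by rewrite subr_eq0 eq_sym lt_eqF.
by apply: (mulIf gy_neq1); rewrite mulVf // y_fix.
Qed.

Lemma tree_weight_ge0 d t : 0 <= tree_weight d t.
Proof. by rewrite mulr_ge0 ?exprn_ge0 ?ltW. Qed.

Lemma esum_tree_weight d :
  \esum_(t in trees_of_height_le d) (tree_weight d t)%:E = y%:E.
Proof.
elim: d => [|d IH].
  by rewrite trees_of_height_le0 esum_set1 /tree_weight ?lee_fin ?mul1r ?ltW.
rewrite trees_of_height_leS esum_image; last exact: set_inj_PNode.
under eq_esum do rewrite tree_weightS_PNode.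
have gw_ge0 t : 0 <= g * tree_weight d t by rewrite mulr_ge0 ?tree_weight_ge0 ?ltW.
have sum_gw : \esum_(t in trees_of_height_le d) (g * tree_weight d t)%:E = (g * y)%:E.
  under eq_esum do rewrite EFinM.
  by rewrite esumZl ?IH ?ltW // => t; rewrite lee_fin tree_weight_ge0.
by rewrite (esum_seqs_in_prod gw_ge0 sum_gw gy01) y_inv.
Qed.

Lemma esum_level_size_tree_weight d :
  \esum_(t in trees_of_height_le d) ((level_size d t)%:R * tree_weight d t)%:E
    = (y * (g * y ^+ 2) ^+ d)%:E.
Proof.
elim: d => [|d IH].
  rewrite trees_of_height_le0 esum_set1; last by rewrite lee_fin mulr_ge0 ?tree_weight_ge0.
  by rewrite /tree_weight /= !expr0 expr1 !mul1r mulr1.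
rewrite trees_of_height_leS esum_image; last exact: set_inj_PNode.
under eq_esum do rewrite tree_weightS_PNode level_sizeS_PNode.
have gw_ge0 t : 0 <= g * tree_weight d t by rewrite mulr_ge0 ?tree_weight_ge0 ?ltW.
have sum_gw : \esum_(t in trees_of_height_le d) (g * tree_weight d t)%:E = (g * y)%:E.
  under eq_esum do rewrite EFinM.
  by rewrite esumZl ?esum_tree_weight ?ltW // => t; rewrite lee_fin tree_weight_ge0.
have sum_kgw : \esum_(t in trees_of_height_le d)
    ((level_size d t)%:R * (g * tree_weight d t))%:E = (g * (y * (g * y ^+ 2) ^+ d))%:E.
  under eq_esum do rewrite mulrCA EFinM.
  by rewrite esumZl ?IH ?ltW // => t; rewrite lee_fin mulr_ge0 ?tree_weight_ge0.
rewrite (esum_seqs_in_sum_prod gw_ge0 sum_gw gy01 sum_kgw); congr EFin.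
by rewrite -exprVn y_inv [X in _ = y * X]exprS; ring.
Qed.

End tree_weights.

Lemma planted_height_image d :
  [set T | planted T /\ height T = d.+1] = (fun t => PNode [:: t]) @` [set t | height t = d].
Proof.
apply/seteqP; split => [[[|t [|? ?]]] [] //|_ [t /= <- <-]]; rewrite height_planted //.
by move=> _ [<-]; exists t.
Qed.

Lemma esum_height_eq_le (R : realType) (f : ptree -> \bar R) d :
  (forall t, (height t < d)%N -> f t = 0%E) ->
  \esum_(t in [set t | height t = d]) f t = \esum_(t in trees_of_height_le d) f t.
Proof.
move=> f0; rewrite esum_mkcond [RHS]esum_mkcond; apply: eq_esum => t _.
case: (ltngtP (height t) d) => [t_lt|t_gt|t_eq]; first by rewrite f0 // !if_same.
  by rewrite !memNset // /trees_of_height_le /= => [|t_eq]; lia.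
by rewrite !mem_set // /trees_of_height_le /= t_eq.
Qed.

Section critical_weights.
Variables (R : realType) (k : R).
Hypothesis k_gt1 : 1 < k.

Let k_gt0 : 0 < k. Proof. exact: lt_trans k_gt1. Qed.
Let k_neq0 : k != 0. Proof. by rewrite gt_eqF. Qed.
Let k1_neq0 : 1 + k != 0. Proof. by rewrite gt_eqF // addr_gt0. Qed.

Lemma Xfun_g_c : Xfun (g_c k) = (1 + k)^-1.
Proof.
rewrite /Xfun /g_c.
have -> : 1 - 4 * (k / (1 + k) ^+ 2) = ((k - 1) / (1 + k)) ^+ 2 by field.
rewrite sqrtr_sqr ger0_norm; first by field.
by rewrite divr_ge0 ?subr_ge0 ?ltW // addr_gt0.
Qed.

Lemma Lambda_planted t :
  Lambda k (PNode [:: t]) = k ^+ (height t).+1 / (1 + k) *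
    ((level_size (height t) t)%:R * tree_weight (g_c k) ((1 + k) / k) (height t) t).
Proof.
rewrite /Lambda height_planted /tree_weight /= !addn0 Xfun_g_c subn1 /=.
have := level_size_le_edges (height t) t.
case: (level_size _ t) => [|K] K_le; first by rewrite !mul0r mulr0.
rewrite ltnS in K_le; rewrite subSS subn1 /=.
move: (edges t - K)%N (subnK K_le) => e <-.
have gy : (1 + k)^-1 = g_c k * ((1 + k) / k) by rewrite /g_c; field; apply/andP.
rewrite [in LHS]gy; move: (g_c k) => g.
by rewrite exprMn exprD !exprS; field; apply/andP.
Qed.

Lemma esum_level_size_tree_weight_critical d :
  \esum_(t in trees_of_height_le d)
     ((level_size d t)%:R * tree_weight (g_c k) ((1 + k) / k) d t)%:E
    = ((1 + k) / k / k ^+ d)%:E.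
Proof.
have g_gt0 : 0 < g_c k by rewrite divr_gt0 ?exprn_gt0 ?addr_gt0.
have y_gt0 : 0 < (1 + k) / k by rewrite divr_gt0 ?addr_gt0.
have gy : g_c k * ((1 + k) / k) = (1 + k)^-1 by rewrite /g_c; field; apply/andP.
have gy_lt1 : g_c k * ((1 + k) / k) < 1 by rewrite gy invf_lt1 ?addr_gt0 // ltrDl.
have y_fix : (1 + k) / k * (1 - g_c k * ((1 + k) / k)) = 1.
  by rewrite gy; field; apply/andP.
rewrite esum_level_size_tree_weight //; congr EFin.
have -> : g_c k * ((1 + k) / k) ^+ 2 = k^-1 by rewrite /g_c; field; apply/andP.
by rewrite exprVn.
Qed.

End critical_weights.

Theorem mainTheorem6 (R : realType) (k : R) (hk : 1 < k) (r : nat) (hr : (0 < r)%N) :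
  (\esum_(T in [set T : ptree | planted T /\ height T = r]) (Lambda k T)%:E = 1)%E.
Proof.
case: r hr => [//|d] _.
have k_gt0 : 0 < k by exact: lt_trans hk.
pose w t := (level_size d t)%:R * tree_weight (g_c k) ((1 + k) / k) d t.
rewrite planted_height_image esum_image; last by move=> ? ? _ _ [].
transitivity (\esum_(t in [set t | height t = d]) ((k ^+ d.+1 / (1 + k))%:E * (w t)%:E))%E.
  by apply: eq_esum => t /= hd; rewrite Lambda_planted // hd EFinM.
rewrite esum_height_eq_le => [|t ht]; last by rewrite /w level_size_gt_height // mul0r mule0.
have w_ge0 t : 0 <= w t.
  by rewrite mulr_ge0 ?tree_weight_ge0 ?divr_gt0 ?exprn_gt0 ?addr_gt0.
rewrite esumZl ?esum_level_size_tree_weight_critical //; last first.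
  by rewrite mulr_ge0 ?invr_ge0 ?exprn_ge0 ?addr_ge0 ?ltW.
rewrite -EFinM exprS; congr EFin.
by field; rewrite expf_neq0 ?gt_eqF ?addr_gt0.
Qed.
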